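(* Let $\mathbb F\subseteq\mathbb D$ be finite and let $(h,i)\in\mathbb F$ be $\mathbb F$-admissible. Then $|\Phi_h^{(i)}(\mathbb F)|=|\mathbb F|+1$ and $\mathrm{lh}(\Phi_h^{(i)}(\mathbb F))=\mathrm{lh}(\mathbb F)$.
   Context: Dyadic intervals: $\Delta_k^{(j)}:=[\frac{j-1}{2^k},\frac{j}{2^k})$ for $k\ge0$. Dyadic tree $\mathbb D:=\{(k,j):k\ge1;\ j=1,\dots,2^{k-1}\}$. Branches: $\mathbb B(t):=\{(k,j)\in\mathbb D:t\in\Delta_{k-1}^{(j)}\}$ for $t\in[0,1)$; local height $\mathrm{lh}(\mathbb F):=\max_{t\in[0,1)}|\mathbb F\cap\mathbb B(t)|$. An index $(h,i)\in\mathbb F$ is $\mathbb F$-admissible if neither $(h+1,2i-1)$ nor $(h+1,2i)$ belongs to $\mathbb F$. The fork is $\mathbb F_h^{(i)}:=\{(h,i),(h+1,2i-1),(h+1,2i)\}$. For $(k,j)\in\mathbb D$ define $j^\ast$ by: $j^\ast=j+2^{k-h-2}$ if $\Delta_{k-1}^{(j)}\subseteq\Delta_{h+1}^{(4i-2)}$; $j^\ast=j-2^{k-h-2}$ if $\Delta_{k-1}^{(j)}\subseteq\Delta_{h+1}^{(4i-1)}$; $j^\ast=j$ otherwise (equivalently $\chi_k^{(j)}\circ\phi_h^{(i)}=\chi_k^{(j^\ast)}$ for $(k,j)\notin\mathbb F_h^{(i)}$, where $\phi_h^{(i)}$ is the map of $[0,1)$ interchanging $\Delta_{h+1}^{(4i-2)}$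 and $\Delta_{h+1}^{(4i-1)}$ by translation and $\chi_k^{(j)}$ are the $L_2$-normalized Haar functions, $\chi_k^{(j)}=\pm2^{(k-1)/2}$ on $\Delta_k^{(2j-1)}$ resp. $\Delta_k^{(2j)}$). Then $\Phi_h^{(i)}(\mathbb F):=\{(h+1,2i-1),(h+1,2i)\}\cup\{(k,j^\ast):(k,j)\in\mathbb F\setminus\mathbb F_h^{(i)}\}$. *)

From HB Require Import structures.
From mathcomp Require Import all_boot all_order all_algebra.
From mathcomp Require Import finmap.
From mathcomp Require Import boolp classical_sets reals.

Set Implicit Arguments. Unset Strict Implicit. Unset Printing Implicit Defensive.
Import Order.TTheory GRing.Theory Num.Theory.

Local Open Scope ring_scope.

Definition dyadic (R : realType) (k j : nat) : set R :=
  [set t : R | ((j - 1)%N%:R / 2 ^+ k <= t) && (t < j%:R / 2 ^+ k)].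

Definition inD (p : nat * nat) : bool :=
  (1 <= p.1)%N && (1 <= p.2 <= 2 ^ (p.1 - 1))%N.

Definition branch (R : realType) (t : R) : set (nat * nat) :=
  [set p | inD p /\ @dyadic R (p.1 - 1) p.2 t].

Local Open Scope fset_scope.

Definition branch_count (R : realType) (F : {fset nat * nat}) (t : R) : nat :=
  #|` [fset p in F | `[< @branch R t p >]] |.

(* lh(F) = max_{t in [0,1)} |F \cap B(t)|  (all values are <= |F|). *)
Definition lh (R : realType) (F : {fset nat * nat}) : nat :=
  \max_(m < (#|` F |).+1 |
          `[< exists t : R, (0 <= t < 1)%R /\ @branch_count R F t = m >]) (m : nat).

Definition admissible (F : {fset nat * nat}) (h i : nat) : bool :=
  [&& (h, i) \in F, (h.+1, (2 * i - 1)%N) \notin F & (h.+1, (2 * i)%N) \notin F].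

Definition fork (h i : nat) : {fset nat * nat} :=
  [fset (h, i); (h.+1, (2 * i - 1)%N); (h.+1, (2 * i)%N)].

Definition jstar (R : realType) (h i : nat) (p : nat * nat) : nat * nat :=
  let k := p.1 in let j := p.2 in
  (k, if `[< (@dyadic R (k - 1) j `<=` @dyadic R (h + 1) (4 * i - 2))%classic >]
      then (j + 2 ^ (k - h - 2))%N
      else if `[< (@dyadic R (k - 1) j `<=` @dyadic R (h + 1) (4 * i - 1))%classic >]
      then (j - 2 ^ (k - h - 2))%N
      else j).

Definition Phi (R : realType) (h i : nat) (F : {fset nat * nat}) : {fset nat * nat} :=
  [fset (h.+1, (2 * i - 1)%N); (h.+1, (2 * i)%N)]
  `|` [fset jstar R h i p | p in F `\` fork h i].

From HB Require Import structures.
From mathcomp Require Import all_boot all_order all_algebra.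
From mathcomp Require Import finmap.
From mathcomp Require Import boolp classical_sets reals.
From mathcomp Require Import zify.

(* Write [phi] for the map of [0,1) that exchanges the middle quarters
   [Delta_(h+1)^(4i-2)] and [Delta_(h+1)^(4i-1)] of [Delta_(h-1)^(i)] by
   translation.  Indexing the level-[k] interval containing [t] by the integer
   part of [2^k t], [phi] permutes these indices at every level [k >= h+1],
   changes at level [h] only which child of [(h,i)] contains the point, and
   fixes all coarser levels; the index map [(k,j) |-> (k,j^* )] is exactly this
   action on intervals.  Hence [j^*] is injective and its image avoids the two
   children of [(h,i)], which admissibility keeps out of [F]:
   [|Phi F| = |F| - 1 + 2].
   Along branches, a node outside the fork lies on [B(t)] iff its image lies on
   [B(phi t)], while [(h,i)] lies on [B(t)] iff exactly one of its children lies
   on [B(phi t)].  So [|Phi F ∩ B(phi t)| = |F ∩ B(t)|], and as [phi] is an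
   involution of [0,1) the local heights agree. *)

Set Implicit Arguments. Unset Strict Implicit. Unset Printing Implicit Defensive.
Import Order.TTheory GRing.Theory Num.Theory.
Local Open Scope ring_scope.

Section DyadicIndex.
Variable R : realType.
Implicit Types (t : R) (n m N K j c w : nat).

Definition dyadic_index n t : nat := Num.truncn (t * 2 ^+ n).

Lemma exp2_gt0 n : (0 : R) < 2 ^+ n.
Proof. exact: exprn_gt0. Qed.

Lemma dyadic_index_eq n t m :
  m%:R <= t * 2 ^+ n < m.+1%:R -> dyadic_index n t = m.
Proof. exact: truncn_def. Qed.

Lemma dyadic_indexP n t : 0 <= t ->
  (dyadic_index n t)%:R <= t * 2 ^+ n < (dyadic_index n t).+1%:R.
Proof. by move=> t0; apply/truncn_itv/mulr_ge0/ltW/exp2_gt0. Qed.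

Lemma dyadic_index_grid n w : dyadic_index n (w%:R / 2 ^+ n) = w.
Proof. by rewrite /dyadic_index mulfVK ?natrK // gt_eqF ?exp2_gt0. Qed.

Lemma dyadic_index_coarsen N K t : 0 <= t -> (N <= K)%N ->
  dyadic_index N t = (dyadic_index K t %/ 2 ^ (K - N))%N.
Proof.
move=> t0 /subnKC; move: (K - N)%N => d <-.
have := dyadic_indexP (N + d) t0; set z := dyadic_index _ t.
rewrite exprD mulrA => /andP[lo hi].
have d0 : (0 : R) < 2 ^+ d := exp2_gt0 d.
apply: dyadic_index_eq; apply/andP; split.
  rewrite -(ler_pM2r d0); apply: le_trans _ lo.
  by rewrite -natrX -natrM ler_nat leq_divM.
rewrite -(ltr_pM2r d0); apply: lt_le_trans hi _.
by rewrite -natrX -natrM ler_nat ltn_ceil ?expn_gt0.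
Qed.

Lemma dyadic_index_addn n t w : 0 <= t ->
  dyadic_index n (t + w%:R / 2 ^+ n) = (dyadic_index n t + w)%N.
Proof.
move=> t0; have /andP[lo hi] := dyadic_indexP n t0.
apply: dyadic_index_eq; rewrite mulrDl divfK ?gt_eqF ?exp2_gt0 // natrD.
by rewrite lerD2r lo -addSn natrD ltrD2r.
Qed.

Lemma dyadic_index_shiftD N K t : 0 <= t -> (N <= K)%N ->
  dyadic_index K (t + 1 / 2 ^+ N) = (dyadic_index K t + 2 ^ (K - N))%N.
Proof.
move=> t0 /subnKC NK; rewrite -dyadic_index_addn //; congr (dyadic_index _ (_ + _)).
rewrite natrX -[in RHS]NK exprD addKn mul1r invfM mulrCA divff ?mulr1 //.
by rewrite gt_eqF ?exp2_gt0.
Qed.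

Lemma dyadic_index_shiftB N K t : 0 <= t -> (N <= K)%N ->
  (0 < dyadic_index N t)%N ->
  dyadic_index K (t - 1 / 2 ^+ N) = (dyadic_index K t - 2 ^ (K - N))%N.
Proof.
move=> t0 NK idx_gt0.
have t'0 : 0 <= t - 1 / 2 ^+ N.
  have /andP[lo _] := dyadic_indexP N t0.
  rewrite subr_ge0 ler_pdivrMr ?exp2_gt0 //; apply: le_trans lo.
  by rewrite ler1n.
by have := dyadic_index_shiftD t'0 NK; rewrite subrK => ->; rewrite addnK.
Qed.

Lemma dyadic_index_lt1 N t : 0 <= t -> (t < 1) = (dyadic_index N t < 2 ^ N)%N.
Proof.
move=> t0; rewrite /dyadic_index truncn_lt_nat ?natrX; last first.
  exact/mulr_ge0/ltW/exp2_gt0.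
by rewrite -{2}(mul1r (2 ^+ N)) ltr_pM2r ?exp2_gt0.
Qed.

Lemma dyadic_ge0 n j t : dyadic n j t -> 0 <= t.
Proof.
by case/andP => lo _; apply: le_trans lo; rewrite divr_ge0 // ltW ?exp2_gt0.
Qed.

Lemma mem_dyadic n j t : 0 <= t ->
  dyadic n j t <-> (0 < j)%N && (dyadic_index n t == j.-1).
Proof.
move=> t0; rewrite /dyadic /= ler_pdivrMr ?exp2_gt0 // ltr_pdivlMr ?exp2_gt0 //.
case: j => [|j] /=.
  by split=> // /andP[_]; rewrite ltNge mulr_ge0 // ltW ?exp2_gt0.
rewrite subn1; split=> [/dyadic_index_eq -> //|/eqP <-].
exact: dyadic_indexP.
Qed.

Lemma mem_dyadic_grid n m j w : (m <= n)%N ->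
  dyadic m j (w%:R / 2 ^+ n : R) <-> (0 < j)%N && (w %/ 2 ^ (n - m) == j.-1)%N.
Proof.
move=> mn; have w0 : (0 : R) <= w%:R / 2 ^+ n by exact/divr_ge0/ltW/exp2_gt0.
by rewrite mem_dyadic // (dyadic_index_coarsen w0 mn) dyadic_index_grid.
Qed.

Lemma dyadic_subset K j N c : (0 < j)%N -> (0 < c)%N ->
  `[< (@dyadic R K j `<=` @dyadic R N c)%classic >] =
  (N <= K)%N && ((j - 1) %/ 2 ^ (K - N) == c - 1)%N.
Proof.
move=> j0 c0; apply/asboolP/idP => [sub|/andP[NK /eqP jc] t Djt]; last first.
  have t0 := dyadic_ge0 Djt; move/(mem_dyadic _ _ t0): Djt => /andP[_ /eqP Kt].
  by apply/(mem_dyadic _ _ t0); rewrite c0 (dyadic_index_coarsen t0 NK) Kt; lia.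
have sub_grid n w : (K <= n)%N -> (N <= n)%N ->
    (w %/ 2 ^ (n - K) = j.-1 -> w %/ 2 ^ (n - N) = c.-1)%N.
  move=> Kn Nn wj; apply/eqP.
  suff /andP[_ ->] : (0 < c)%N && (w %/ 2 ^ (n - N) == c.-1)%N by [].
  by apply/(mem_dyadic_grid _ _ Nn)/sub/(mem_dyadic_grid _ _ Kn); rewrite j0 wj eqxx.
case: (leqP N K) => [NK|KN] /=.
  by have := sub_grid K (j - 1)%N (leqnn K) NK; rewrite subnn divn1; lia.
(* For [K < N], [Delta_K^(j)] contains the distinct grid points [(j-1)q / 2^N]
   and [((j-1)q+1) / 2^N], which no single level-[N] interval contains. *)
set q := (2 ^ (N - K))%N; have q2 : (2 <= q)%N.
  by rewrite -[2%N]/(2 ^ 1)%N leq_pexp2l // subn_gt0.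
have := sub_grid N ((j - 1) * q + 1)%N (ltnW KN) (leqnn N).
have := sub_grid N ((j - 1) * q)%N (ltnW KN) (leqnn N).
rewrite subnn !divn1 mulnK ?divnMDl ?divn_small ?expn_gt0 //; lia.
Qed.

End DyadicIndex.

Section Swap.
Variables (h i : nat).
Hypothesis i_gt0 : (0 < i)%N.

(* On 0-based level-[h.+1] indices, [midswap] exchanges the two middle quarters
   [Delta_(h+1)^(4i-2)] and [Delta_(h+1)^(4i-1)] of [Delta_(h-1)^(i)]. *)
Definition midswap (z : nat) : nat :=
  if z == (4 * i - 3)%N then (4 * i - 2)%N
  else if z == (4 * i - 2)%N then (4 * i - 3)%N else z.

Lemma midswapK : involutive midswap.
Proof. by move=> z; rewrite /midswap; do ![case: eqP]; lia. Qed.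

Lemma midswap_div4 z : (midswap z %/ 4 = z %/ 4)%N.
Proof. by rewrite /midswap; do ![case: eqP]; lia. Qed.

Definition swap_index (K x : nat) : nat :=
  if (h.+1 <= K)%N then
    (midswap (x %/ 2 ^ (K - h.+1)) * 2 ^ (K - h.+1) + x %% 2 ^ (K - h.+1))%N
  else x.

Lemma swap_indexK K : involutive (swap_index K).
Proof.
move=> x; rewrite /swap_index; case: leqP => // _.
set q := (2 ^ _)%N; have q0 : (0 < q)%N by rewrite expn_gt0.
by rewrite divnMDl // modnMDl modn_mod (divn_small (ltn_pmod x q0)) addn0 midswapK
  -divn_eq.
Qed.

Lemma swap_index_inj K : injective (swap_index K).
Proof. exact: can_inj (swap_indexK K). Qed.

Variable R : realType.
Implicit Types t : R.

Definition phi t : R :=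
  if dyadic_index h.+1 t == (4 * i - 3)%N then t + 1 / 2 ^+ h.+1
  else if dyadic_index h.+1 t == (4 * i - 2)%N then t - 1 / 2 ^+ h.+1
  else t.

Lemma phi_ge0 t : 0 <= t -> 0 <= phi t.
Proof.
move=> t0; rewrite /phi; case: eqP => _.
  by rewrite addr_ge0 // divr_ge0 // ltW ?exp2_gt0.
case: eqP => // idx_t.
have /andP[lo _] := dyadic_indexP h.+1 t0.
rewrite subr_ge0 ler_pdivrMr ?exp2_gt0 //; apply: le_trans lo.
by rewrite idx_t ler1n; lia.
Qed.

Lemma dyadic_index_phi K t : 0 <= t -> (h.+1 <= K)%N ->
  dyadic_index K (phi t) = swap_index K (dyadic_index K t).
Proof.
move=> t0 hK; rewrite /phi /swap_index hK /midswap -(dyadic_index_coarsen t0 hK).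
have := divn_eq (dyadic_index K t) (2 ^ (K - h.+1)).
rewrite -(dyadic_index_coarsen t0 hK); case: eqP => [E|_].
  by rewrite dyadic_index_shiftD // E; lia.
case: eqP => [E|_]; last by lia.
by rewrite dyadic_index_shiftB ?E //; nia.
Qed.

Lemma dyadic_index_phi_coarse K t : 0 <= t -> (K <= h.+1)%N ->
  dyadic_index K (phi t) = (midswap (dyadic_index h.+1 t) %/ 2 ^ (h.+1 - K))%N.
Proof.
move=> t0 Kh; rewrite (dyadic_index_coarsen (phi_ge0 t0) Kh).
by rewrite dyadic_index_phi // /swap_index leqnn subnn divn1 modn1 muln1 addn0.
Qed.

Lemma phiK t : 0 <= t -> phi (phi t) = t.
Proof.
move=> t0; rewrite {1}/phi (dyadic_index_phi_coarse t0 (leqnn _)) subnn divn1.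
rewrite /midswap /phi; set z := dyadic_index h.+1 t.
have [_|z3] := eqVneq z (4 * i - 3)%N.
  by rewrite ifF ?eqxx ?addrK //; apply/eqP; lia.
have [_|z2] := eqVneq z (4 * i - 2)%N; first by rewrite eqxx subrK.
by rewrite (negbTE z3) (negbTE z2).
Qed.

Lemma phi_itv t : (0 < h)%N -> (i <= 2 ^ (h - 1))%N -> 0 <= t < 1 ->
  0 <= phi t < 1.
Proof.
move=> h0 ih /andP[t0]; rewrite phi_ge0 //= !(dyadic_index_lt1 h.+1) ?phi_ge0 //.
rewrite (dyadic_index_phi_coarse t0 (leqnn _)) subnn divn1.
have -> : (2 ^ h.+1 = 4 * 2 ^ (h - 1))%N by rewrite -(expnD 2 2); congr expn; lia.
by rewrite /midswap; do ![case: eqP]; lia.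
Qed.

End Swap.

Lemma jstarE (R : realType) h i k j : (0 < i)%N -> (0 < j)%N ->
  jstar R h i (k, j) = (k, (swap_index h i (k - 1) (j - 1)).+1).
Proof.
move=> i0 j0; rewrite /jstar /= !dyadic_subset ?addn1; try lia.
rewrite /swap_index /midswap; case: leqP => [kh|hk] /=; first by congr pair; lia.
have -> : (k - h - 2 = k - 1 - h.+1)%N by lia.
have -> : (4 * i - 2 - 1 = 4 * i - 3)%N by lia.
have -> : (4 * i - 1 - 1 = 4 * i - 2)%N by lia.
set q := (2 ^ (k - 1 - h.+1))%N; set a := ((j - 1) %/ q)%N.
have := divn_eq (j - 1) q; rewrite -/a.
have [-> dj|_] := eqVneq a (4 * i - 3)%N; first by congr pair; nia.
have [-> dj|_ dj] := eqVneq a (4 * i - 2)%N; congr pair; nia.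
Qed.

Lemma jstar_id (R : realType) h i p : (0 < i)%N -> (p.1 <= h.+1)%N -> (0 < p.2)%N ->
  jstar R h i p = p.
Proof.
case: p => k j /= i0 kh j0; rewrite jstarE // /swap_index ifN; first by congr pair; lia.
by rewrite -ltnNge; lia.
Qed.

Lemma jstar_inj (R : realType) h i p q : (0 < i)%N -> (0 < p.2)%N -> (0 < q.2)%N ->
  jstar R h i p = jstar R h i q -> p = q.
Proof.
case: p q => k j [k' j'] /= i0 j0 j'0; rewrite !jstarE // => -[<- /swap_index_inj jj].
by congr pair; lia.
Qed.

Section Branch.
Variable R : realType.
Implicit Types (t : R) (p : nat * nat) (X : {fset nat * nat}).

Definition branchb t p : bool :=
  [&& (0 < p.1)%N, (0 < p.2)%N & dyadic_index (p.1 - 1) t == (p.2 - 1)%N].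

Lemma branchbE t p : 0 <= t < 1 -> `[< branch t p >] = branchb t p.
Proof.
case/andP=> t0 t1; case: p => k j; rewrite /branch /branchb /inD /=.
apply/asboolP/idP => [[/andP[-> /andP[-> _]]]|/and3P[k0 j0 /eqP Kt]].
  by move/(mem_dyadic _ _ t0) => /andP[_ /eqP ->]; rewrite subn1 eqxx.
split; last by apply/(mem_dyadic _ _ t0); rewrite j0 Kt subn1 eqxx.
by move: t1; rewrite (dyadic_index_lt1 (k - 1) t0) Kt k0 j0 /=; lia.
Qed.

Lemma branch_count_sum X t : 0 <= t < 1 ->
  branch_count X t = (\sum_(p <- X) branchb t p)%N.
Proof.
move=> t01; rewrite /branch_count card_fset_sum1 -big_fset_condE big_mkcond.
by apply: eq_bigr => p _; rewrite branchbE //; case: branchb.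
Qed.

Lemma branch_count_le X t : (branch_count X t <= #|` X|)%N.
Proof.
by apply/fsubset_leq_card/fsubsetP => p; rewrite !inE => /andP[].
Qed.

Lemma lh_eq X Y :
  (forall m, (exists t, 0 <= t < 1 /\ branch_count X t = m) <->
             (exists t, 0 <= t < 1 /\ branch_count Y t = m)) ->
  lh R X = lh R Y.
Proof.
move=> XY; pose P Z m := `[< exists t, 0 <= t < 1 /\ branch_count Z t = m >].
have P_lt Z m : P Z m -> (m < (#|` Z|).+1)%N.
  by case/asboolP=> t [_ <-]; rewrite ltnS branch_count_le.
rewrite /lh (big_ord_widen_cond _ (P X) id (leq_addr (#|` Y|).+1 (#|` X|).+1)).
rewrite (big_ord_widen_cond _ (P Y) id (leq_addl (#|` X|).+1 (#|` Y|).+1)).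
apply: eq_bigl => m; have PXY : P X m = P Y m := asbool_equiv_eq (XY m).
rewrite -PXY; case: (boolP (P X m)) => //= PXm.
by rewrite (P_lt X m PXm) P_lt // -PXY.
Qed.

Lemma branchb_children t h i : 0 <= t -> (0 < h)%N -> (0 < i)%N ->
  (branchb t (h.+1, (2 * i - 1)%N) + branchb t (h.+1, (2 * i)%N))%N = branchb t (h, i).
Proof.
move=> t0 h0 i0; rewrite /branchb /= h0 i0 subSS subn0.
rewrite (dyadic_index_coarsen t0 (leq_subr 1 h)) (subKn h0) expn1.
by do ![case: eqP]; lia.
Qed.

Lemma branchb_phi_jstar h i t p : (0 < i)%N -> 0 <= t -> (0 < p.2)%N ->
  p != (h.+1, (2 * i - 1)%N) -> p != (h.+1, (2 * i)%N) ->
  branchb (phi h i t) (jstar R h i p) = branchb t p.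
Proof.
case: p => [[|k] j] i0 t0 /= j0 c1 c2; rewrite jstarE // /branchb /= j0 //= !subn1 /=.
case: (leqP h.+1 k) => [hk|kh].
  by rewrite dyadic_index_phi // (inj_eq (@swap_index_inj h i i0 k)).
rewrite /swap_index leqNgt kh /= (dyadic_index_phi_coarse i0 t0 (ltnW kh)).
rewrite (dyadic_index_coarsen t0 (ltnW kh)); set z := dyadic_index h.+1 t.
case: (ltngtP k h) => [kh'|hk|hk]; last 2 first.
- by move: kh; rewrite ltnS leqNgt hk.
- move: c1 c2; rewrite hk !xpair_eqE eqxx subSnn expn1 /= => /eqP c1 /eqP c2.
  by rewrite /midswap; do ![case: eqP]; lia.
have -> : (2 ^ (h.+1 - k) = 4 * 2 ^ (h.+1 - k - 2))%N.
  by rewrite -(expnD 2 2); congr expn; lia.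
by rewrite !divnMA (midswap_div4 i0).
Qed.

End Branch.

Local Open Scope fset_scope.

Section PhiMap.
Variables (R : realType) (F : {fset nat * nat}) (h i : nat).
Hypotheses (F_D : forall p, p \in F -> inD p) (F_adm : admissible F h i).

Let hiF : (h, i) \in F. Proof. by case/and3P: F_adm. Qed.
Let c1F : (h.+1, (2 * i - 1)%N) \notin F. Proof. by case/and3P: F_adm. Qed.
Let c2F : (h.+1, (2 * i)%N) \notin F. Proof. by case/and3P: F_adm. Qed.
Let h_gt0 : (0 < h)%N. Proof. by case/and3P: (F_D hiF). Qed.
Let i_gt0 : (0 < i)%N. Proof. by case/and3P: (F_D hiF). Qed.
Let i_le : (i <= 2 ^ (h - 1))%N. Proof. by case/and3P: (F_D hiF). Qed.
Let F_pos p : p \in F -> (0 < p.2)%N. Proof. by case/F_D/and3P. Qed.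

Lemma Phi_sum (G : nat * nat -> nat) :
  (\sum_(p <- Phi R h i F) G p = G (h.+1, 2 * i - 1) + G (h.+1, 2 * i)
     + \sum_(p <- F `\ (h, i)) G (jstar R h i p))%N.
Proof.
have fork_F : F `\` fork h i = F `\ (h, i).
  apply/fsetP => p; rewrite !inE; have [pF|] := boolP (p \in F); last by rewrite !andbF.
  by rewrite !negb_or (memPn c1F _ pF) (memPn c2F _ pF) !andbT.
have child_notin c : (h.+1, c) \notin F ->
    (h.+1, c) \notin [fset jstar R h i p | p in F `\ (h, i)].
  move=> cF; apply/imfsetP => -[p pF cp]; move: pF; rewrite !inE => /andP[_ pF].
  have p1 : p.1 = h.+1 by rewrite -[p.1]/((jstar R h i p).1) -cp.
  have pc : p = (h.+1, c) by rewrite cp jstar_id ?p1 ?F_pos.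
  by move: pF; rewrite pc (negbTE cF).
rewrite /Phi fork_F -fsetUA !big_fsetU1 ?child_notin //; last first.
  by rewrite !inE negb_or child_notin // xpair_eqE eqxx /=; apply/eqP; lia.
rewrite big_imfset /= ?addnA // => p q; rewrite !inE.
by move=> /andP[_ /F_pos p0] /andP[_ /F_pos q0]; apply: jstar_inj.
Qed.

Lemma card_Phi : #|` Phi R h i F| = (#|` F|).+1.
Proof. by rewrite card_fset_sum1 Phi_sum -card_fset_sum1 (cardfsD1 (h, i) F) hiF. Qed.

Lemma branch_count_Phi (t : R) : 0 <= t < 1 ->
  branch_count (Phi R h i F) (phi h i t) = branch_count F t.
Proof.
move=> t01; have /andP[t0 _] := t01.
rewrite !branch_count_sum ?phi_itv // Phi_sum (big_fsetD1 (h, i) hiF) /=.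
have hi_not_child c : (h, i) != (h.+1, c) by rewrite xpair_eqE (ltn_eqF (ltnSn h)).
rewrite branchb_children ?phi_ge0 // -{1}(@jstar_id R h i (h, i)) //.
rewrite branchb_phi_jstar //; congr (_ + _)%N.
apply: eq_big_seq => p; rewrite !inE => /andP[_ pF].
by rewrite branchb_phi_jstar ?(memPn c1F _ pF) ?(memPn c2F _ pF) ?F_pos.
Qed.

Lemma lh_Phi : lh R (Phi R h i F) = lh R F.
Proof.
apply: lh_eq => m; split=> -[t [t01 <-]]; exists (phi h i t); rewrite phi_itv //.
  by rewrite -branch_count_Phi ?phi_itv // phiK //; case/andP: t01.
by rewrite branch_count_Phi.
Qed.

End PhiMap.

Theorem lemma3p6 (R : realType) (F : {fset nat * nat}) (h i : nat) :
  (forall p, p \in F -> inD p) ->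
  admissible F h i ->
  #|` Phi R h i F | = (#|` F |).+1 /\ lh R (Phi R h i F) = lh R F.
Proof. by move=> F_D F_adm; split; [exact: card_Phi | exact: lh_Phi]. Qed.
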